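(* Let $q\ge2$, $n\ge1$, $m=n+1$, $R\in[m]$ and $r\equiv m\pmod R$ with $0\le r<R$. Then $$\max_{{\boldsymbol y}\in\Sigma_{q,R}^m}\mathsf{H}^{\mathsf{In}}_{1\text{-}\mathsf{Ins}}({\boldsymbol y})=\log_2 m-\frac1m\left(r\left\lceil\tfrac mR\right\rceil\log_2\left\lceil\tfrac mR\right\rceil+(R-r)\left\lfloor\tfrac mR\right\rfloor\log_2\left\lfloor\tfrac mR\right\rfloor\right),$$ and the maximum is attained only by balanced channel outputs.
   Context: $\Sigma_q=\{0,\dots,q-1\}$. For sequences ${\boldsymbol x}$ of length $\ell$ and ${\boldsymbol y}$ of length $N\ge\ell$, $\omega_{{\boldsymbol x}}({\boldsymbol y})$ is the number of index tuples $1\le i_1<\dots<i_\ell\le N$ with $y_{i_j}=x_j$. The $1$-insertion channel with input length $n$ maps ${\boldsymbol x}\in\Sigma_q^n$ to ${\boldsymbol y}\in\Sigma_q^{n+1}$ with probability $\omega_{{\boldsymbol x}}({\boldsymbol y})/((n+1)q)$; under uniform transmission ($X$ uniform on $\Sigma_q^n$), $\mathsf{H}^{\mathsf{In}}_{1\text{-}\mathsf{Ins}}({\boldsymbol y})=H(X\mid Y={\boldsymbol y})$ in bits, with posterior $P({\boldsymbol x}\mid {\boldsymbol y})=\Pr\{{\boldsymbol y}\mid{\boldsymbol x}\}/\sum_{{\boldsymbol x}'}\Pr\{{\boldsymbol y}\mid{\boldsymbol x}'\}$. A run is a maximal block of identical consecutive symbols; $\Sigma_{q,R}^m$ is the set of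 sequences in $\Sigma_q^m$ with exactly $R$ runs. A sequence in $\Sigma_{q,R}^m$ is balanced if it has $r$ runs of length $\lceil m/R\rceil$ and $R-r$ runs of length $\lfloor m/R\rfloor$, where $r\equiv m\pmod R$. Convention $0\log0=0$. *)

From HB Require Import structures.
From mathcomp Require Import all_boot all_order all_algebra.
From mathcomp Require Import reals exp.
Set Implicit Arguments. Unset Strict Implicit. Unset Printing Implicit Defensive.
Import Order.TTheory GRing.Theory Num.Theory.
Local Open Scope ring_scope.

(* Sigma_q^N is N.-tuple 'I_q. *)

(* omega_x(y): number of index sets {i_1<...<i_l} (increasing enumeration of
   S : {set 'I_N}) such that the subsequence of y at S equals x. *)
Definition omega (q l N : nat) (x : l.-tuple 'I_q) (y : N.-tuple 'I_q) : nat :=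
  #|[set S : {set 'I_N} | [seq tnth y i | i <- enum S] == val x]|.

Definition ins_prob (F : realType) (q n : nat)
  (x : n.-tuple 'I_q) (y : n.+1.-tuple 'I_q) : F :=
  (omega x y)%:R / (n.+1 * q)%:R.

(* Posterior P(x | y) under uniform input. *)
Definition posterior (F : realType) (q n : nat)
  (y : n.+1.-tuple 'I_q) (x : n.-tuple 'I_q) : F :=
  ins_prob F x y / \sum_(x' : n.-tuple 'I_q) ins_prob F x' y.

Definition log2 (F : realType) (p : F) : F := ln p / ln 2.

Definition xlog2x (F : realType) (p : F) : F :=
  if p == 0 then 0 else p * log2 p.

Definition Hin (F : realType) (q n : nat) (y : n.+1.-tuple 'I_q) : F :=
  - \sum_(x : n.-tuple 'I_q) xlog2x (posterior F y x).

Fixpoint runlens_aux (T : eqType) (a : T) (k : nat) (s : seq T) : seq nat :=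
  match s with
  | [::] => [:: k]
  | b :: s' => if b == a then runlens_aux a k.+1 s' else k :: runlens_aux b 1 s'
  end.

Definition runlens (T : eqType) (s : seq T) : seq nat :=
  match s with [::] => [::] | a :: s' => runlens_aux a 1 s' end.

Definition nruns (T : eqType) (s : seq T) : nat := size (runlens s).

Definition ceil_div (m R : nat) : nat := if (R %| m)%N then (m %/ R)%N else (m %/ R).+1.

Definition balanced (T : eqType) (m R : nat) (s : seq T) : bool :=
  perm_eq (runlens s) (nseq (m %% R) (ceil_div m R) ++ nseq (R - m %% R) (m %/ R))%N.

From HB Require Import structures.
From mathcomp Require Import all_boot all_order all_algebra.
From mathcomp Require Import reals exp.
From mathcomp Require Import zify ring lra.
Import Order.TTheory GRing.Theory Num.Theory.
Local Open Scope ring_scope.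
Set Implicit Arguments. Unset Strict Implicit.

(* Under uniform input the posterior of x given y is the multiplicity of x
   among the m single-symbol deletions of y, divided by m.  Deleting any symbol
   of a run gives the same word, and deletions from different runs differ, so
   these multiplicities are exactly the run lengths of y and
   H(X | Y = y) = log2 m - (1/m) * sum_l l log2 l over the run lengths l.
   As k |-> k log2 k is strictly convex on the naturals, it lies above its
   chord through floor(m/R) and floor(m/R) + 1, touching it only there; summing
   over R run lengths of total m, the sum is minimal exactly when every run
   length is one of these two values, i.e. for balanced sequences, and two
   letters suffice to realise such run lengths by alternating runs. *)

Section Runs.
Variable T : eqType.
Implicit Types (s : seq T) (a b : T).

Lemma sumn_runlens_aux a k s : sumn (runlens_aux a k s) = (k + size s)%N.
Proof. by elim: s a k => [|b s IHs] a k /=; [|case: eqP => _ /=; rewrite IHs]; lia. Qed.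

Lemma runlens_aux_gt0 a k s : (0 < k)%N -> all (fun l => 0 < l)%N (runlens_aux a k s).
Proof.
elim: s a k => [|b s IHs] a k k_gt0 /=; first by rewrite k_gt0.
by case: eqP => _ /=; rewrite ?k_gt0 IHs.
Qed.

Lemma sumn_runlens s : sumn (runlens s) = size s.
Proof. by case: s => //= a s; rewrite sumn_runlens_aux. Qed.

Lemma runlens_gt0 s l : l \in runlens s -> (0 < l)%N.
Proof. by case: s => //= a s; apply/allP/runlens_aux_gt0. Qed.

Lemma runlens_aux_nseq a k j s :
  runlens_aux a k (nseq j a ++ s) = runlens_aux a (k + j) s.
Proof. by elim: j k => [|j IHj] k /=; rewrite ?addn0 // eqxx IHj addSnnS. Qed.

End Runs.

Fixpoint alt_runs (T : Type) (a b : T) (L : seq nat) : seq T :=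
  if L is l :: L' then nseq l a ++ alt_runs b a L' else [::].

Lemma size_alt_runs (T : Type) (a b : T) L : size (alt_runs a b L) = sumn L.
Proof. by elim: L a b => //= l L IHL a b; rewrite size_cat size_nseq IHL. Qed.

Lemma runlens_aux_alt_runs (T : eqType) (a b : T) k L : a != b ->
  {in L, forall l, 0 < l}%N -> runlens_aux a k (alt_runs b a L) = k :: L.
Proof.
elim: L a b k => //= -[|l] L IHL a b k neq_ab L_gt0.
  by have := L_gt0 0%N (mem_head _ _).
rewrite /= eq_sym (negPf neq_ab) runlens_aux_nseq IHL 1?eq_sym //.
by move=> j Lj; apply: L_gt0; rewrite inE Lj orbT.
Qed.

Lemma runlens_alt_runs (T : eqType) (a b : T) L : a != b ->
  {in L, forall l, 0 < l}%N -> runlens (alt_runs a b L) = L.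
Proof.
case: L => //= -[|l] L neq_ab L_gt0; first by have := L_gt0 0%N (mem_head _ _).
rewrite /= runlens_aux_nseq runlens_aux_alt_runs // => j Lj.
by apply: L_gt0; rewrite inE Lj orbT.
Qed.

Definition balanced_runlens (N R : nat) : seq nat :=
  (nseq (N %% R) (ceil_div N R) ++ nseq (R - N %% R) (N %/ R))%N.

Lemma balanced_runlensE N R :
  balanced_runlens N R = (nseq (N %% R) (N %/ R).+1 ++ nseq (R - N %% R) (N %/ R))%N.
Proof. by rewrite /balanced_runlens /ceil_div /dvdn; case: eqP => [-> |]. Qed.

Lemma balanced_runlensMDl f c R : (c <= R)%N ->
  balanced_runlens (R * f + c) R = nseq c f.+1 ++ nseq (R - c)%N f.
Proof.
rewrite balanced_runlensE leq_eqVlt => /orP[/eqP-> | lt_cR].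
  case: R => [|R] //.
  by rewrite -mulnSr modnMr mulKn // subn0 subnn cats0.
have R_gt0 : (0 < R)%N by apply: leq_ltn_trans lt_cR.
by rewrite mulnC modnMDl modn_small // divnMDl // divn_small // addn0.
Qed.

Lemma sum_balanced_runlens (V : pzSemiRingType) (h : nat -> V) N R :
  \sum_(l <- balanced_runlens N R) h l =
  (N %% R)%N%:R * h (ceil_div N R) + (R - N %% R)%N%:R * h (N %/ R)%N.
Proof. by rewrite big_cat !big_nseq !iter_addr_0 !mulr_natl. Qed.

Lemma size_balanced_runlens N R : (0 < R)%N -> size (balanced_runlens N R) = R.
Proof. by move=> R_gt0; rewrite size_cat !size_nseq subnKC // ltnW // ltn_mod. Qed.

Lemma sumn_balanced_runlens N R : (0 < R)%N -> sumn (balanced_runlens N R) = N.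
Proof.
move=> R_gt0; have : (N %% R < R)%N by rewrite ltn_mod.
rewrite balanced_runlensE sumn_cat !sumn_nseq [RHS](divn_eq N R).
by move: (N %/ R)%N (N %% R)%N => f r; nia.
Qed.

Lemma balanced_runlens_gt0 N R l : (0 < R <= N)%N ->
  l \in balanced_runlens N R -> (0 < l)%N.
Proof.
case/andP=> R_gt0 le_RN; rewrite balanced_runlensE mem_cat !mem_nseq.
by case/orP=> /andP[_ /eqP->] //; rewrite divn_gt0.
Qed.

Lemma two_values_balanced f rl : all (fun l => (l == f) || (l == f.+1)) rl ->
  perm_eq rl (balanced_runlens (sumn rl) (size rl)).
Proof.
move=> two_rl; set c := count_mem f.+1 rl.
have sum_rl : sumn rl = (size rl * f + c)%N.
  elim: rl two_rl @c => //= l rl IHrl /andP[/orP[]/eqP-> /IHrl->].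
    by rewrite (ltn_eqF (ltnSn f)); lia.
  by rewrite eqxx; lia.
rewrite sum_rl balanced_runlensMDl ?count_size // -(perm_filterC (pred1 f.+1)).
have -> : [seq l <- rl | pred1 f.+1 l] = nseq c f.+1.
  by rewrite /c -size_filter; apply/all_pred1P/filter_all.
suff -> : [seq l <- rl | predC (pred1 f.+1) l] = nseq (size rl - c) f by [].
rewrite -(count_predC (pred1 f.+1) rl) addKn -size_filter.
apply/all_pred1P/allP => l; rewrite mem_filter /= => /andP[neq_lf1 rl_l].
by have := allP two_rl l rl_l; rewrite (negPf neq_lf1) orbF.
Qed.

Section ConvexSequence.
Variables (F : realDomainType) (h : nat -> F).
Hypothesis h_convex : forall k, h k.+1 - h k < h k.+2 - h k.+1.

Local Notation d k := (h k.+1 - h k).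

Definition chord f l : F := h f + (l%:R - f%:R) * d f.

Lemma increment_lt i j : (i < j)%N -> d i < d j.
Proof. exact: (homo_ltn lt_trans h_convex). Qed.

Lemma chord_lt f l : l != f -> l != f.+1 -> chord f l < h l.
Proof.
rewrite /chord => neq_lf neq_lf1; case: (ltngtP l f) => [lt_lf | lt_fl | eq_lf].
- have : \sum_(l <= k < f) d k < \sum_(l <= k < f) d f.
    by apply: ltr_sum_nat => // k /andP[_ lt_kf]; apply: increment_lt.
  rewrite telescope_sumr 1?ltnW // sumr_const_nat => lt_sum.
  rewrite -mulr_natl natrB 1?ltnW // in lt_sum; lra.
- have lt_f1l : (f.+1 < l)%N by rewrite ltn_neqAle eq_sym neq_lf1.
  have : \sum_(f.+1 <= k < l) d f < \sum_(f.+1 <= k < l) d k.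
    by apply: ltr_sum_nat => // k /andP[lt_fk _]; apply: increment_lt.
  rewrite telescope_sumr 1?ltnW // sumr_const_nat => lt_sum.
  rewrite -mulr_natl natrB 1?ltnW // -natr1 in lt_sum; lra.
- by rewrite eq_lf eqxx in neq_lf.
Qed.

Lemma chord_le f l : chord f l <= h l.
Proof.
rewrite /chord; have [-> | neq_lf] := eqVneq l f; first by rewrite subrr mul0r addr0.
have [-> | neq_lf1] := eqVneq l f.+1.
  by rewrite -natr1 addrAC subrr add0r mul1r addrC subrK.
by rewrite ltW // chord_lt.
Qed.

(* The chord is affine, so its sum over rl only sees size rl and sumn rl. *)
Lemma sum_chord rl : \sum_(l <- rl) chord (sumn rl %/ size rl) l =
  \sum_(l <- balanced_runlens (sumn rl) (size rl)) h l.
Proof.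
have [/size0nil -> | R_gt0] := posnP (size rl); first by rewrite !big_nil.
set N := sumn rl; set R := size rl; set f := (N %/ R)%N; set r := (N %% R)%N.
have le_rR : (r <= R)%N by rewrite ltnW // ltn_mod.
have N_eq : N%:R = f%:R * R%:R + r%:R :> F.
  by rewrite [N in LHS](divn_eq N R) natrD natrM.
rewrite balanced_runlensE big_cat !big_nseq !iter_addr_0 /chord big_split /=.
rewrite -mulr_suml sumrB -natr_sum -sumnE !big_const_seq count_predT !iter_addr_0.
by rewrite -/N -/R -/f -/r mulrnBr // N_eq; ring.
Qed.

Lemma balanced_sum_le rl N R : sumn rl = N -> size rl = R ->
  \sum_(l <- balanced_runlens N R) h l <= \sum_(l <- rl) h l.
Proof. by move=> <- <-; rewrite -sum_chord; apply: ler_sum => l _; apply: chord_le. Qed.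

Lemma balanced_sum_eq rl N R : sumn rl = N -> size rl = R ->
  \sum_(l <- rl) h l = \sum_(l <- balanced_runlens N R) h l ->
  perm_eq rl (balanced_runlens N R).
Proof.
move=> <- <-; set f := (sumn rl %/ size rl)%N.
rewrite -sum_chord => /eqP; rewrite -subr_eq0 -sumrB psumr_eq0 => [/allP gap0|l _].
  apply: (@two_values_balanced f); apply/allP => l rl_l; apply: contraT.
  rewrite negb_or => /andP[neq_lf neq_lf1]; have := chord_lt neq_lf neq_lf1.
  by move: (gap0 l rl_l); rewrite /= subr_eq0 => /eqP->; rewrite ltxx.
by rewrite subr_ge0 chord_le.
Qed.

End ConvexSequence.

Section XLogX.
Variable F : realType.

Lemma lt_ln1Dx (x : F) : -1 < x -> x != 0 -> ln (1 + x) < x.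
Proof. by move=> gt_xN1 x_neq0; rewrite -ltr_expR lnK ?expR_gt1Dx // posrE; lra. Qed.

(* The second difference is (k+2) ln(1 + 1/(k+1)) - k ln(1 + 1/k), and
   ln(1 + x) <= x bounds the second term by 1 and the first from below by 1. *)
Lemma xlnx_nat_convex k :
  k.+1%:R * ln k.+1%:R - k%:R * ln (k%:R : F) <
  k.+2%:R * ln k.+2%:R - k.+1%:R * ln k.+1%:R.
Proof.
have ln_succ j : ln j.+2%:R - ln j.+1%:R = ln (1 + j.+1%:R^-1) :> F.
  rewrite -ln_div ?posrE ?ltr0n //; congr ln.
  by rewrite -natr1 mulrDl divff ?mul1r // pnatr_eq0.
have upper : k%:R * (ln k.+1%:R - ln k%:R) <= 1 :> F.
  case: k => [|k]; first by rewrite mul0r ler01.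
  have k1_gt0 : (0 : F) < k.+1%:R by rewrite ltr0n.
  have /le_ln1Dx : -1 < k.+1%:R^-1 :> F by rewrite (lt_trans (ltrN10 _)) // invr_gt0.
  by rewrite -ln_succ -(ler_pM2l k1_gt0) mulfV // lt0r_neq0.
have lower : 1 < k.+2%:R * (ln k.+2%:R - ln k.+1%:R) :> F.
  have k2_gt0 : (0 : F) < k.+2%:R by rewrite ltr0n.
  have /lt_ln1Dx : -1 < - k.+2%:R^-1 :> F by rewrite ltrN2 invf_lt1 // ltr1n.
  rewrite oppr_eq0 invr_eq0 lt0r_neq0 // => /(_ isT).
  rewrite -(ltr_pM2l k2_gt0) mulrN mulfV ?lt0r_neq0 //.
  have -> : 1 - k.+2%:R^-1 = k.+1%:R / k.+2%:R :> F.
    by rewrite -[k.+1%:R](addrK 1) natr1 mulrBl divff ?mul1r // lt0r_neq0.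
  rewrite ln_div ?posrE ?ltr0n //; lra.
lra.
Qed.

Lemma xlog2x_natE k : xlog2x (k%:R : F) = k%:R * ln k%:R / ln 2.
Proof. by rewrite /xlog2x /log2 pnatr_eq0; case: eqP => [->|_]; rewrite ?mul0r ?mulrA. Qed.

Lemma xlog2x_nat_convex k :
  xlog2x (k.+1%:R : F) - xlog2x k%:R < xlog2x k.+2%:R - xlog2x k.+1%:R.
Proof.
by rewrite !xlog2x_natE -!mulrBl ltr_pM2r ?xlnx_nat_convex // invr_gt0 ln_gt0 // ltr1n.
Qed.

End XLogX.

Section SumByCount.
Variables (V : nmodType) (g : nat -> V).

Definition sum_by_count (U : eqType) (L : seq U) : V := \sum_(w <- L) g (count_mem w L).

Lemma sum_by_count_nseq_cat (U : eqType) k (u : U) L : u \notin L ->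
  sum_by_count (nseq k u ++ L) = g k *+ k + sum_by_count L.
Proof.
move=> uL; rewrite /sum_by_count big_cat big_nseq iter_addr_0 /=.
rewrite count_cat count_nseq /= eqxx mul1n (count_memPn uL) addn0; congr (_ + _).
rewrite !big_seq; apply: eq_bigr => w wL; rewrite count_cat count_nseq /=.
by case: eqP wL => // <-; rewrite (negPf uL).
Qed.

Lemma sum_by_count_map (U W : eqType) (f : W -> U) L : injective f ->
  sum_by_count (map f L) = sum_by_count L.
Proof.
move=> inj_f; rewrite /sum_by_count big_map; apply: eq_bigr => w _.
by rewrite count_map; congr (g _); apply: eq_count => v /=; rewrite inj_eq.
Qed.

End SumByCount.

Section Deletions.
Variable T : Type.
Implicit Types (s t : seq T) (a : T).

Definition delete s i := take i s ++ drop i.+1 s.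

Definition deletions s := [seq delete s i | i <- iota 0 (size s)].

Lemma size_delete s i : (i < size s)%N -> size (delete s i) = (size s).-1.
Proof. by move=> lt_is; rewrite size_cat size_take size_drop lt_is; lia. Qed.

Lemma size_deletions s : all (fun w => size w == (size s).-1) (deletions s).
Proof.
by rewrite all_map; apply/allP => i; rewrite mem_iota => /andP[_ ?] /=; rewrite size_delete.
Qed.

Lemma deletions_nseq_cat k a t : deletions (nseq k a ++ t) =
  nseq k (nseq k.-1 a ++ t) ++ map (cat (nseq k a)) (deletions t).
Proof.
rewrite /deletions size_cat size_nseq iotaD map_cat add0n.
rewrite [iota k _](_ : _ = map (addn k) (iota 0 (size t))); last first.
  by rewrite -iotaDl addn0.
rewrite -!map_comp; congr (_ ++ _).
  apply: (@eq_from_nth _ [::]) => [|i]; rewrite size_map size_iota ?size_nseq //.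
  move=> lt_ik; rewrite nth_nseq lt_ik (nth_map 0) ?size_iota // nth_iota // add0n.
  rewrite /delete take_cat drop_cat size_nseq lt_ik (take_nseq _ (ltnW lt_ik)).
  case: ltnP => le_ik.
    by rewrite drop_nseq catA -nseqD; congr (nseq _ _ ++ _); lia.
  by rewrite (_ : i.+1 - k = 0)%N ?drop0; [congr (nseq _ _ ++ _)|]; lia.
apply: eq_map => j /=.
rewrite /delete take_cat drop_cat size_nseq ltnNge leq_addr ltnNge.
by rewrite (leq_trans (leq_addr j k)) // addKn -addnS addKn catA.
Qed.

End Deletions.

Section DeletionsRuns.
Variables (T : eqType) (V : nmodType) (g : nat -> V).
Implicit Types (s : seq T) (a : T).

(* The word obtained from the first run has b != a at position k, so no
   deletion further right produces it. *)
Lemma sum_by_count_deletions_nseq_cat k a s :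
  sum_by_count g (deletions (nseq k.+1 a ++ s)) =
  \sum_(l <- runlens_aux a k.+1 s) g l *+ l.
Proof.
elim: s a k => [|b s IHs] a k.
  rewrite deletions_nseq_cat sum_by_count_nseq_cat // big_seq1.
  by rewrite /sum_by_count big_nil addr0.
have [-> | neq_ba] := eqVneq b a.
  by rewrite /= eqxx -IHs -[a :: s]cat1s catA -[[:: a]]/(nseq 1 a) -nseqD addn1.
have -> : runlens_aux a k.+1 (b :: s) = k.+1 :: runlens_aux b 1 s.
  by rewrite /= (negPf neq_ba).
rewrite big_cons deletions_nseq_cat sum_by_count_nseq_cat.
  rewrite sum_by_count_map; first by rewrite -(IHs b 0).
  by move=> u v /(congr1 (drop k.+1)); rewrite !drop_size_cat ?size_nseq.
apply/mapP => -[w _] /(congr1 (nth a ^~ k)).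
rewrite !nth_cat !size_nseq ltnn subnn ltnSn nth_nseq ltnSn /=.
by move/eqP; rewrite (negPf neq_ba).
Qed.

Lemma sum_by_count_deletions s :
  sum_by_count g (deletions s) = \sum_(l <- runlens s) g l *+ l.
Proof.
case: s => [|a s]; first by rewrite /sum_by_count !big_nil.
by rewrite -[a :: s]/(nseq 1 a ++ s) sum_by_count_deletions_nseq_cat.
Qed.

End DeletionsRuns.

Lemma enum_setC1 (T : finType) (i : T) : enum [set~ i] = filter (predC1 i) (enum T).
Proof.
by rewrite /enum_mem -filter_predI; apply: eq_filter => j; rewrite /= !inE andbT.
Qed.

Lemma map_tnth_enum_setC1 (T : Type) N (y : N.-tuple T) (i : 'I_N) :
  [seq tnth y j | j <- enum [set~ i]] = delete y i.
Proof.
have lt_iN := ltn_ord i.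
have iotaN : iota 0 N = iota 0 i ++ val i :: iota i.+1 (N - i.+1).
  by rewrite -[in LHS](subnKC lt_iN) addSnnS iotaD.
have -> : [seq tnth y j | j <- enum [set~ i]] =
          [seq nth (tnth y i) y j | j <- iota 0 N & j != val i].
  rewrite enum_setC1 -val_enum_ord [in RHS]filter_map -map_comp.
  by apply: eq_map => j /=; rewrite (tnth_nth (tnth y i)).
rewrite iotaN filter_cat /= eqxx /= !(all_filterP _) ?map_cat; last 2 first.
- by apply/allP => j; rewrite mem_iota; lia.
- by apply/allP => j; rewrite mem_iota; lia.
rewrite map_nth_iota0 ?size_tuple 1?ltnW // map_nth_iota ?size_tuple //.
by rewrite [take _ (drop _ _)]take_oversize ?size_drop ?size_tuple.
Qed.

(* An n-subset of the m = n + 1 positions is the complement of one position. *)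
Lemma omega_deletions q n (x : n.-tuple 'I_q) (y : n.+1.-tuple 'I_q) :
  omega x y = count_mem (val x) (deletions y).
Proof.
rewrite /omega.
have -> : [set S : {set 'I_n.+1} | [seq tnth y i | i <- enum S] == val x] =
          [set [set~ i] | i in [set i : 'I_n.+1 | delete y i == val x]].
  apply/setP => S; rewrite inE; apply/eqP/imsetP => [xS | [i + ->]]; last first.
    by rewrite inE map_tnth_enum_setC1 => /eqP.
  have /cards1P[i Si] : #|~: S| == 1%N.
    have := cardsC S; rewrite card_ord cardE -(size_map (tnth y)) xS size_tuple.
    by move=> ?; apply/eqP; lia.
  have defS : S = [set~ i] by rewrite -Si setCK.
  by exists i; rewrite // inE -map_tnth_enum_setC1 -defS xS.
rewrite card_imset; last by move=> i j /setC_inj /set1_inj.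
rewrite -sum1dep_card -(big_mkord (fun i => delete y i == val x) (fun=> 1%N)).
by rewrite sum1_count /deletions size_tuple count_map.
Qed.

Lemma sum_tuple_count_mem (V : nmodType) (T : finType) n (L : seq (seq T))
    (G : seq T -> V) : all (fun w => size w == n) L ->
  \sum_(x : n.-tuple T) G x *+ count_mem (val x) L = \sum_(w <- L) G w.
Proof.
elim: L => [|w L IHL] /=; first by rewrite big_nil big1.
rewrite big_cons; case/andP => sz_w /IHL <-.
under eq_bigr do rewrite mulrnDr.
rewrite big_split /= (bigD1 (Tuple sz_w)) //= eqxx big1 ?addr0 // => x neq_x.
suff /negPf -> : w != val x by [].
by apply: contraNneq neq_x => w_x; apply/eqP/val_inj.
Qed.

Section Entropy.
Variables (F : realType) (q n : nat).
Hypothesis q_gt0 : (0 < q)%N.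
Implicit Types (x : n.-tuple 'I_q) (y : n.+1.-tuple 'I_q).

Lemma size_deletions_tuple y : all (fun w => size w == n) (deletions y).
Proof. by have := size_deletions y; rewrite size_tuple. Qed.

Lemma posterior_deletions y x :
  posterior F y x = (count_mem (val x) (deletions y))%:R / n.+1%:R.
Proof.
have sum_omega : \sum_(x' : n.-tuple 'I_q) (omega x' y)%:R = n.+1%:R :> F.
  under eq_bigr do rewrite omega_deletions.
  rewrite (sum_tuple_count_mem (fun=> 1)) ?size_deletions_tuple //.
  by rewrite big_const_seq iter_addr_0 count_predT size_map size_iota size_tuple.
rewrite /posterior /ins_prob -mulr_suml sum_omega omega_deletions natrM.
have q_neq0 : q%:R != 0 :> F by rewrite pnatr_eq0 -lt0n.
by field; rewrite q_neq0 andbT addrC natr1 pnatr_eq0.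
Qed.

Lemma Hin_runlens y :
  Hin F y = log2 n.+1%:R - n.+1%:R^-1 * \sum_(l <- runlens y) xlog2x l%:R.
Proof.
set m := n.+1; pose g c : F := m%:R^-1 * log2 (c%:R / m%:R).
have xlog2x_count c : xlog2x (c%:R / m%:R : F) = g c *+ c.
  case: c => [|c]; first by rewrite mul0r /xlog2x eqxx.
  by rewrite /xlog2x mulf_eq0 invr_eq0 !pnatr_eq0 /= -[in RHS]mulr_natl /g /log2 !mulrA.
have run_term l : l \in runlens y ->
    g l *+ l = m%:R^-1 * xlog2x l%:R - m%:R^-1 * log2 m%:R * l%:R.
  move=> /runlens_gt0 l_gt0; rewrite /g /xlog2x pnatr_eq0 gtn_eqF // /log2.
  by rewrite ln_div ?posrE ?ltr0n // -mulr_natr; ring.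
rewrite /Hin; under eq_bigr do rewrite posterior_deletions xlog2x_count.
rewrite (sum_tuple_count_mem (fun w => g (count_mem w (deletions y))));
  last exact: size_deletions_tuple.
rewrite -[\sum_(w <- _) _]/(sum_by_count g (deletions y)) sum_by_count_deletions.
rewrite big_seq (eq_bigr _ run_term) -big_seq sumrB -!mulr_sumr -natr_sum -sumnE.
by rewrite sumn_runlens size_tuple mulrAC mulVf ?pnatr_eq0 // mul1r opprB.
Qed.

End Entropy.

Theorem lemma9 (F : realType) (q n R : nat) :
  (2 <= q)%N -> (1 <= n)%N -> (1 <= R <= n.+1)%N ->
  let m := n.+1 in
  let r := (m %% R)%N in
  let V : F := log2 m%:R - m%:R^-1 *
      (r%:R * xlog2x (ceil_div m R)%:R + (R - r)%:R * xlog2x (m %/ R)%:R) in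
  [/\ (exists y : m.-tuple 'I_q, nruns y = R /\ Hin F y = V),
      (forall y : m.-tuple 'I_q, nruns y = R -> Hin F y <= V) &
      (forall y : m.-tuple 'I_q, nruns y = R -> Hin F y = V -> balanced m R y)].
Proof.
move=> q_ge2 _ /andP[R_gt0 le_Rm] m r V.
have q_gt0 : (0 < q)%N by apply: ltnW.
pose h k := xlog2x (k%:R : F).
have h_convex : forall k, h k.+1 - h k < h k.+2 - h k.+1 := @xlog2x_nat_convex F.
have HinE (y : m.-tuple 'I_q) : Hin F y = log2 m%:R - m%:R^-1 * \sum_(l <- runlens y) h l.
  exact: Hin_runlens.
have VE : V = log2 m%:R - m%:R^-1 * \sum_(l <- balanced_runlens m R) h l.
  by rewrite sum_balanced_runlens.
have sumn_y (y : m.-tuple 'I_q) : sumn (runlens y) = m by rewrite sumn_runlens size_tuple.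
split.
- pose y0 := alt_runs (Ordinal q_gt0) (Ordinal q_ge2) (balanced_runlens m R).
  have runs_y0 : runlens y0 = balanced_runlens m R.
    by apply: runlens_alt_runs => // l; apply: balanced_runlens_gt0; rewrite R_gt0.
  have size_y0 : size y0 == m by rewrite size_alt_runs sumn_balanced_runlens.
  by exists (Tuple size_y0); rewrite /nruns HinE VE /= runs_y0 size_balanced_runlens.
- move=> y nruns_y; rewrite HinE VE lerD2l lerN2 ler_pM2l ?invr_gt0 ?ltr0n //.
  exact: (@balanced_sum_le _ h h_convex _ _ _ (sumn_y y) nruns_y).
- have minv_neq0 : m%:R^-1 != 0 :> F by rewrite invr_eq0 pnatr_eq0.
  move=> y nruns_y; rewrite HinE VE => /addrI/oppr_inj/(mulfI minv_neq0) eq_sum.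
  exact: (@balanced_sum_eq _ h h_convex _ _ _ (sumn_y y) nruns_y eq_sum).
Qed.
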